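(* Let $q$ be a prime power, $2\le n\le m$, let $C\subseteq\mathbb{F}_{q^m}^n$ be a vector rank-metric code, and let $\Gamma,\Gamma'$ be $\mathbb{F}_q$-bases of $\mathbb{F}_{q^m}$. Then $P(\Gamma(C),\mathrm c)=P(\Gamma'(C),\mathrm c)$ and $P(\Gamma(C),\mathrm r)\sim P(\Gamma'(C),\mathrm r)$.
   Context: A vector rank-metric code is an $\mathbb{F}_{q^m}$-linear subspace of $\mathbb{F}_{q^m}^n$. For an $\mathbb{F}_q$-basis $\Gamma=\{\gamma_1,\dots,\gamma_m\}$ of $\mathbb{F}_{q^m}$ and $v\in\mathbb{F}_{q^m}^n$, $\Gamma(v)$ is the unique $n\times m$ matrix over $\mathbb{F}_q$ with $v_i=\sum_j\Gamma(v)_{ij}\gamma_j$, and $\Gamma(C)=\{\Gamma(v)\mid v\in C\}$, an $\mathbb{F}_q$-linear subspace of the space $\mathrm{Mat}$ of $n\times m$ matrices over $\mathbb{F}_q$. For such a subspace $\mathcal{C}$ and subspaces $J\subseteq\mathbb{F}_q^n$, $K\subseteq\mathbb{F}_q^m$: $\mathcal{C}(J,\mathrm c)=\{M\in\mathcal{C}\mid\mathrm{colsp}(M)\subseteq J\}$, $\mathcal{C}(K,\mathrm r)=\{M\in\mathcal{C}\mid\mathrm{rowsp}(M)\subseteq K\}$, $\rho_{\mathrm c}(\mathcal{C},J)=(\dim\mathcal{C}-\dim\mathcal{C}(J^\perp,\mathrm c))/m$, $\rho_{\mathrm r}(\mathcal{C},K)=(\dim\mathcal{C}-\dim\mathcal{C}(K^\perp,\mathrm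 r))/n$ ($\perp$ for the standard inner product); $P(\mathcal{C},\mathrm c)=(\mathbb{F}_q^n,\rho_{\mathrm c}(\mathcal{C},\cdot))$, $P(\mathcal{C},\mathrm r)=(\mathbb{F}_q^m,\rho_{\mathrm r}(\mathcal{C},\cdot))$. Two pairs $(\mathbb{F}_q^N,\rho_1)$, $(\mathbb{F}_q^N,\rho_2)$ are equivalent ($\sim$) if there is an $\mathbb{F}_q$-linear isomorphism $\varphi$ of $\mathbb{F}_q^N$ with $\rho_1(A)=\rho_2(\varphi(A))$ for all subspaces $A$. *)

From HB Require Import structures.
From mathcomp Require Import all_boot all_order all_algebra all_field.
Set Implicit Arguments. Unset Strict Implicit. Unset Printing Implicit Defensive.
Import GRing.Theory Num.Theory.
Local Open Scope ring_scope.

(* F plays the role of F_q (any finite field, so q is a prime power),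
   L the role of F_{q^m} (a finite field extension of F of degree m). *)
Section RankMetricDefs.
Variables (F : finFieldType) (L : fieldExtType F).

(* The vector v with v_i = sum_j M_ij gamma_j : the inverse of v |-> Gamma(v). *)
Definition gamma_vec n m (g : m.-tuple L) (M : 'M[F]_(n, m)) : 'rV[L]_n :=
  \row_(i < n) \sum_(j < m) M i j *: tnth g j.

Definition gamma_mx n m (g : m.-tuple L) (v : 'rV[L]_n) : 'M[F]_(n, m) :=
  \matrix_(i < n, j < m) coord g j (v 0 i).

(* Gamma(C) = { Gamma(v) | v in C }, as an F-subspace of Mat (F is finite). *)
Definition Gamma_code n m (g : m.-tuple L) (C : {vspace 'rV[L]_n})
  : {vspace 'M[F]_(n, m)} :=
  <<[seq M <- enum 'M[F]_(n, m) |
     (gamma_vec g M \in C) && (gamma_mx g (gamma_vec g M) == M)]>>%VS.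

Definition perp N (J : {vspace 'rV[F]_N}) : {vspace 'rV[F]_N} :=
  <<[seq u <- enum 'rV[F]_N |
     [forall w : 'rV[F]_N, (w \in J) ==> ((u *m w^T) ord0 ord0 == 0%R)]]>>%VS.

Definition colsp_sub n m (M : 'M[F]_(n, m)) (J : {vspace 'rV[F]_n}) : bool :=
  [forall j : 'I_m, (col j M)^T \in J].

Definition rowsp_sub n m (M : 'M[F]_(n, m)) (K : {vspace 'rV[F]_m}) : bool :=
  [forall i : 'I_n, row i M \in K].

Definition sub_c n m (C : {vspace 'M[F]_(n, m)}) (J : {vspace 'rV[F]_n})
  : {vspace 'M[F]_(n, m)} :=
  <<[seq M <- enum 'M[F]_(n, m) | (M \in C) && colsp_sub M J]>>%VS.

Definition sub_r n m (C : {vspace 'M[F]_(n, m)}) (K : {vspace 'rV[F]_m})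
  : {vspace 'M[F]_(n, m)} :=
  <<[seq M <- enum 'M[F]_(n, m) | (M \in C) && rowsp_sub M K]>>%VS.

Definition rho_c n m (C : {vspace 'M[F]_(n, m)}) (J : {vspace 'rV[F]_n}) : rat :=
  ((\dim C)%:R - (\dim (sub_c C (perp J)))%:R) / m%:R.

Definition rho_r n m (C : {vspace 'M[F]_(n, m)}) (K : {vspace 'rV[F]_m}) : rat :=
  ((\dim C)%:R - (\dim (sub_r C (perp K)))%:R) / n%:R.

(* P(C, c) = (F^n, rho_c(C, .)) and P(C, r) = (F^m, rho_r(C, .)); the ambient
   space is determined by the type, so a pair is represented by its function. *)
Definition P_c n m (C : {vspace 'M[F]_(n, m)}) := rho_c C.
Definition P_r n m (C : {vspace 'M[F]_(n, m)}) := rho_r C.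

Definition pair_equiv N (r1 r2 : {vspace 'rV[F]_N} -> rat) : Prop :=
  exists phi : 'End('rV[F]_N),
    lker phi = 0%VS /\ forall A : {vspace 'rV[F]_N}, r1 A = r2 (phi @: A)%VS.

End RankMetricDefs.

From mathcomp Require Import all_boot all_order all_algebra all_field.
From Stdlib Require Import FunctionalExtensionality.
Set Implicit Arguments. Unset Strict Implicit. Unset Printing Implicit Defensive.
Import GRing.Theory.
Local Open Scope ring_scope.

(* Passing from the basis Gamma to Gamma' multiplies every matrix on the right
   by an invertible change-of-basis matrix B, so Gamma'(C) = Gamma(C) B.
   Right multiplication by B is an isomorphism of Mat that keeps column spaces
   fixed, hence maps C(J, c) onto C(J, c) B and leaves rho_c unchanged.  It
   moves row spaces by B; since (K^perp) B = (K B^-T)^perp, it maps C(K, r)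
   onto C(K B^-T, r) B, so K |-> K B^-T is the required equivalence of the
   row pairs. *)

Section MatrixSubspaces.
Variable F : finFieldType.

Lemma memv_span_filter p q (P : pred 'M[F]_(p, q)) :
  P 0 -> (forall a u v, P u -> P v -> P (a *: u + v)) ->
  forall M, (M \in <<[seq x <- enum 'M[F]_(p, q) | P x]>>%VS) = P M.
Proof.
move=> P0 PC M; apply/idP/idP; last first.
  by move=> PM; apply: memv_span; rewrite mem_filter PM mem_enum.
set s := [seq x <- _ | _].
move/(@coord_span _ _ _ (in_tuple s)) => ->.
apply: (big_ind P) => //.
  by move=> x y Px Py; rewrite -(scale1r x); apply: PC.
move=> i _; rewrite -[_ *: _]addr0; apply: PC => //.
have : s`_i \in s by exact: mem_nth.
by rewrite mem_filter => /andP[].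
Qed.

Lemma mem_perp N (J : {vspace 'rV[F]_N}) u :
  (u \in perp J) = [forall w, (w \in J) ==> ((u *m w^T) 0 0 == 0)].
Proof.
rewrite /perp memv_span_filter //.
  by apply/forallP => w; rewrite mul0mx mxE eqxx implybT.
move=> a x y /forallP Px /forallP Py; apply/forallP => w.
apply/implyP => wJ; move/implyP/(_ wJ)/eqP: (Px w) => xw0.
move/implyP/(_ wJ)/eqP: (Py w) => yw0.
by rewrite mulmxDl -scalemxAl mxE [X in X + _]mxE xw0 yw0 mulr0 addr0.
Qed.

Lemma mem_sub_c n m (X : {vspace 'M[F]_(n, m)}) J M :
  (M \in sub_c X J) = (M \in X) && colsp_sub M J.
Proof.
rewrite /sub_c memv_span_filter //.
  rewrite mem0v; apply/forallP => j.
  by rewrite col0 trmx0 mem0v.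
move=> a x y /andP[xX /forallP xJ] /andP[yX /forallP yJ].
rewrite memvD ?memvZ //=; apply/forallP => j.
by rewrite linearD linearZ /= linearD linearZ /= memvD ?memvZ.
Qed.

Lemma mem_sub_r n m (X : {vspace 'M[F]_(n, m)}) K M :
  (M \in sub_r X K) = (M \in X) && rowsp_sub M K.
Proof.
rewrite /sub_r memv_span_filter //.
  by rewrite mem0v; apply/forallP => i; rewrite row0 mem0v.
move=> a x y /andP[xX /forallP xK] /andP[yX /forallP yK].
rewrite memvD ?memvZ //=; apply/forallP => i.
by rewrite linearD linearZ /= memvD ?memvZ.
Qed.

Lemma colsp_sub_mulmx n m (M : 'M[F]_(n, m)) (B : 'M[F]_m) J :
  colsp_sub M J -> colsp_sub (M *m B) J.
Proof.
move=> /forallP MJ; apply/forallP => j.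
have -> : (col j (M *m B))^T = \sum_k B k j *: (col k M)^T.
  apply/rowP => i; rewrite !mxE summxE; apply: eq_bigr => k _.
  by rewrite !mxE mulrC.
by apply: memv_suml => k _; rewrite memvZ.
Qed.

Definition rmul p q (B : 'M[F]_q) : 'End('M[F]_(p, q)) := linfun (mulmxr B).

Lemma rmulE p q (B : 'M[F]_q) M : rmul p B M = M *m B.
Proof. by rewrite lfunE. Qed.

Lemma perp_rmul q (B : 'M[F]_q) (K : {vspace 'rV[F]_q}) u :
  (u \in perp (rmul 1 B @: K)%VS) = (u *m B^T \in perp K).
Proof.
rewrite !mem_perp; apply/forallP/forallP => uK w.
  apply/implyP => wK; have := implyP (uK (w *m B)).
  by rewrite -rmulE memv_img // rmulE trmx_mul mulmxA => /(_ isT).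
apply/implyP => /memv_imgP [k kK ->].
by rewrite rmulE trmx_mul mulmxA; exact: (implyP (uK k) kK).
Qed.

Section UnitRightMul.
Variables (q : nat) (B : 'M[F]_q).
Hypothesis B_unit : B \in unitmx.

Lemma rmul_inj p : injective (rmul p B).
Proof. by move=> u v; rewrite !rmulE; apply: (can_inj (mulmxK B_unit)). Qed.

Lemma dim_rmul p (X : {vspace 'M[F]_(p, q)}) : \dim (rmul p B @: X) = \dim X.
Proof. by apply: limg_dim_eq; move/lker0P/eqP: (@rmul_inj p) => ->; rewrite capv0. Qed.

Lemma mem_rmul p (X : {vspace 'M[F]_(p, q)}) M :
  (M \in (rmul p B @: X)%VS) = (M *m invmx B \in X).
Proof.
apply/idP/idP => [/memv_imgP[N NX ->]|MX]; first by rewrite rmulE mulmxK.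
by apply/memv_imgP; exists (M *m invmx B); rewrite // rmulE mulmxKV.
Qed.

Lemma colsp_sub_rmul p (M : 'M[F]_(p, q)) J :
  colsp_sub (M *m B) J = colsp_sub M J.
Proof.
apply/idP/idP; last exact: colsp_sub_mulmx.
by move/(colsp_sub_mulmx (invmx B)); rewrite mulmxK.
Qed.

Lemma rowsp_sub_rmul p (M : 'M[F]_(p, q)) V :
  rowsp_sub (M *m B) (rmul 1 B @: V)%VS = rowsp_sub M V.
Proof.
by apply: eq_forallb => i; rewrite row_mul mem_rmul mulmxK.
Qed.

Lemma perp_rmul_invT (K : {vspace 'rV[F]_q}) :
  perp (rmul 1 (invmx B)^T @: K)%VS = (rmul 1 B @: perp K)%VS.
Proof. by apply/vspaceP => u; rewrite perp_rmul trmxK mem_rmul. Qed.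

Lemma sub_c_rmul p (X : {vspace 'M[F]_(p, q)}) J :
  sub_c (rmul p B @: X)%VS J = (rmul p B @: sub_c X J)%VS.
Proof.
apply/vspaceP => M; rewrite mem_rmul !mem_sub_c mem_rmul.
by rewrite -[in colsp_sub M J](mulmxKV B_unit M) colsp_sub_rmul.
Qed.

Lemma sub_r_rmul p (X : {vspace 'M[F]_(p, q)}) K :
  sub_r (rmul p B @: X)%VS (perp (rmul 1 (invmx B)^T @: K)%VS)
  = (rmul p B @: sub_r X (perp K))%VS.
Proof.
apply/vspaceP => M; rewrite mem_rmul !mem_sub_r mem_rmul perp_rmul_invT.
by rewrite -[in rowsp_sub M _](mulmxKV B_unit M) rowsp_sub_rmul.
Qed.

End UnitRightMul.

Lemma P_c_rmul q (B : 'M[F]_q) p (X : {vspace 'M[F]_(p, q)}) :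
  B \in unitmx -> P_c (rmul p B @: X)%VS = P_c X.
Proof.
move=> B_unit; apply: functional_extensionality => J.
by rewrite /P_c /rho_c sub_c_rmul // !dim_rmul.
Qed.

Lemma pair_equiv_P_r_rmul q (B : 'M[F]_q) p (X : {vspace 'M[F]_(p, q)}) :
  B \in unitmx -> pair_equiv (P_r X) (P_r (rmul p B @: X)%VS).
Proof.
move=> B_unit.
have invBT_unit : (invmx B)^T \in unitmx by rewrite unitmx_tr unitmx_inv.
exists (rmul 1 (invmx B)^T); split; first exact/eqP/lker0P/(rmul_inj invBT_unit).
by move=> K; rewrite /P_r /rho_r sub_r_rmul // !dim_rmul.
Qed.

End MatrixSubspaces.

Section BasisChange.
Variables (F : finFieldType) (L : fieldExtType F) (n m : nat).
Implicit Types (g : m.-tuple L) (M : 'M[F]_(n, m)).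

Lemma gamma_vecK g : free g -> cancel (@gamma_vec F L n m g) (gamma_mx g).
Proof.
move=> g_free M; apply/matrixP => i j; rewrite !mxE linear_sum /=.
rewrite (bigD1 j) //= big1 ?addr0 => [|k kj].
  by rewrite linearZ /= (tnth_nth 0) coord_free // eqxx mulr1.
by rewrite linearZ /= (tnth_nth 0) coord_free // (negbTE kj) mulr0.
Qed.

Lemma mem_Gamma_code g (C : {vspace 'rV[L]_n}) M : free g ->
  (M \in Gamma_code g C) = (gamma_vec g M \in C).
Proof.
move=> g_free; rewrite /Gamma_code memv_span_filter ?gamma_vecK ?eqxx ?andbT //.
  suff -> : gamma_vec g (0 : 'M_(n, m)) = 0 by rewrite mem0v.
  by apply/rowP => i; rewrite !mxE big1 // => j _; rewrite mxE scale0r.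
move=> a x y /andP[xC _] /andP[yC _]; rewrite gamma_vecK // eqxx andbT.
suff -> : gamma_vec g (a *: x + y) = a%:A *: gamma_vec g x + gamma_vec g y.
  by rewrite memvD ?memvZ.
apply/rowP => i; rewrite !mxE mulr_sumr -big_split /=.
by apply: eq_bigr => j _; rewrite !mxE scalerDl mulr_algl scalerA.
Qed.

Definition basis_change_mx g (g' : m.-tuple L) : 'M[F]_m :=
  \matrix_(j, k) coord g k (tnth g' j).

Lemma gamma_vec_basis_change g (g' : m.-tuple L) M : basis_of fullv g ->
  gamma_vec g' M = gamma_vec g (M *m basis_change_mx g g').
Proof.
move=> g_basis; apply/rowP => i; rewrite !mxE.
under [RHS]eq_bigr do rewrite !mxE scaler_suml.
rewrite exchange_big /=; apply: eq_bigr => j _.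
rewrite [in LHS](coord_basis g_basis (memvf (tnth g' j))) scaler_sumr.
by apply: eq_bigr => k _; rewrite !mxE scalerA !(tnth_nth 0).
Qed.

Lemma mul_basis_change_mx g (g' : m.-tuple L) : basis_of fullv g -> free g' ->
  basis_change_mx g g' *m basis_change_mx g' g = 1%:M.
Proof.
move=> g_basis g'_free; apply/matrixP => j l; rewrite !mxE.
have := coord_basis g_basis (memvf (tnth g' j)).
move/(congr1 (coord g' l)); rewrite linear_sum /=.
rewrite [in LHS](tnth_nth 0) coord_free // => ->.
by apply: eq_bigr => k _; rewrite linearZ /= !mxE (tnth_nth 0 g k).
Qed.

Lemma basis_change_mx_unit g (g' : m.-tuple L) :
  basis_of fullv g -> basis_of fullv g' -> basis_change_mx g g' \in unitmx.
Proof.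
move=> g_basis g'_basis.
by case: (mulmx1_unit (mul_basis_change_mx g_basis (basis_free g'_basis))).
Qed.

Lemma Gamma_code_basis_change g (g' : m.-tuple L) (C : {vspace 'rV[L]_n}) :
  basis_of fullv g -> basis_of fullv g' ->
  Gamma_code g' C = (rmul n (invmx (basis_change_mx g g')) @: Gamma_code g C)%VS.
Proof.
move=> g_basis g'_basis; apply/vspaceP => M.
have T_unit := basis_change_mx_unit g_basis g'_basis.
rewrite mem_rmul ?unitmx_inv // invmxK.
rewrite !mem_Gamma_code ?(basis_free g_basis) ?(basis_free g'_basis) //.
by rewrite (gamma_vec_basis_change _ _ g_basis).
Qed.

End BasisChange.

Theorem proposition5p9 (F : finFieldType) (L : fieldExtType F) (n m : nat)
  (hm : \dim (fullv : {vspace L}) = m) (h2n : (2 <= n)%N) (hnm : (n <= m)%N)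
  (C : {vspace 'rV[L]_n}) (g g' : m.-tuple L)
  (hg : basis_of (fullv : {vspace L}) g) (hg' : basis_of (fullv : {vspace L}) g') :
  P_c (Gamma_code g C) = P_c (Gamma_code g' C) /\
  pair_equiv (P_r (Gamma_code g C)) (P_r (Gamma_code g' C)).
Proof.
have B_unit : invmx (basis_change_mx g g') \in unitmx.
  by rewrite unitmx_inv basis_change_mx_unit.
rewrite (Gamma_code_basis_change C hg hg') P_c_rmul //.
by split; last exact: pair_equiv_P_r_rmul.
Qed.
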